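(* Let $G$ be a graph on $n$ vertices of tree-width $w$, and suppose that its complement $\overline{G}$ is closed under the Bondy–Chvátal closure, i.e. for every two distinct vertices $u,v$ that are non-adjacent in $\overline{G}$ we have $\deg_{\overline{G}}(u)+\deg_{\overline{G}}(v)<n$. Then the neighborhood diversity of $\overline{G}$ is at most $2^{k}+k$, where $k=2(w^2+w)$.
   Context: All graphs are finite and simple. The complement $\overline{G}$ of a graph $G=(V,E)$ is the graph $(V,\binom{V}{2}\setminus E)$. Tree-width: a tree decomposition of $G$ is a pair $(T,\{X_i\}_{i\in I})$ with $T=(I,F)$ a tree and bags $X_i\subseteq V(G)$ such that every vertex lies in some bag, every edge has both endpoints in some bag, and for each vertex $v$ the nodes whose bags contain $v$ induce a subtree of $T$; its width is $\max_i|X_i|-1$, and the tree-width of $G$ is the minimum width over all tree decompositions. The neighborhood diversity of a graph $H$ is the minimum size of a partition of $V(H)$ into classes such that any two vertices $v,v'$ in the same class satisfy $N(v)\setminus\{v'\}=N(v')\setminus\{v\}$. *)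

From mathcomp Require Import all_boot.
Set Implicit Arguments. Unset Strict Implicit. Unset Printing Implicit Defensive.

Definition simple_graph (T : finType) (e : rel T) : Prop :=
  symmetric e /\ irreflexive e.

Definition compl_graph (T : finType) (e : rel T) : rel T :=
  fun x y => (x != y) && ~~ e x y.

Definition deg (T : finType) (e : rel T) (v : T) : nat := #|[set x | e v x]|.

(* A tree on the node set 'I_m (m > 0): symmetric irreflexive, connected,
   with exactly m - 1 (undirected) edges, i.e. 2(m-1) ordered adjacent pairs. *)
Definition is_tree (m : nat) (f : rel 'I_m) : Prop :=
  [/\ 0 < m, symmetric f, irreflexive f,
      (forall i j, connect f i j)
    & #|[set p : 'I_m * 'I_m | f p.1 p.2]| = (m - 1).*2].

Definition tree_decomposition (T : finType) (e : rel T)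
    (m : nat) (f : rel 'I_m) (B : 'I_m -> {set T}) : Prop :=
  [/\ is_tree f,
      (forall v, exists i, v \in B i),
      (forall u v, e u v -> exists i, (u \in B i) && (v \in B i))
    & (forall v i j, v \in B i -> v \in B j ->
         connect (fun a b => [&& f a b, v \in B a & v \in B b]) i j)].

Definition td_width (T : finType) (m : nat) (B : 'I_m -> {set T}) : nat :=
  (\max_(i < m) #|B i|).-1.

Definition has_td_of_width (T : finType) (e : rel T) (w : nat) : Prop :=
  exists m (f : rel 'I_m) (B : 'I_m -> {set T}),
    tree_decomposition e f B /\ td_width B = w.

Definition treewidth_eq (T : finType) (e : rel T) (w : nat) : Prop :=
  has_td_of_width e w /\ (forall w', has_td_of_width e w' -> w <= w').

Definition nd_partition (T : finType) (e : rel T) (k : nat) (c : T -> 'I_k) : Prop :=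
  forall v v', c v = c v' ->
    [set x | e v x] :\ v' = [set x | e v' x] :\ v.

Definition nd_eq (T : finType) (e : rel T) (d : nat) : Prop :=
  (exists c : T -> 'I_d, nd_partition e c /\ forall t, exists v, c v = t) /\
  (forall k (c : T -> 'I_k), nd_partition e c -> d <= k).

From mathcomp Require Import all_boot zify.
Set Implicit Arguments. Unset Strict Implicit. Unset Printing Implicit Defensive.

(* Root the decomposition tree and send every vertex u to the shallowest bag containing it.
   The bags containing a vertex form a subtree, so for every edge uv one endpoint lies in
   the top bag of the other; charging the edge to that bag gives sum of degrees <= 2nw.
   The closure condition on the complement says that adjacent vertices of G have degree sum
   at least n - 1, so the vertices of degree >= (n - 1)/2 form a vertex cover S of G, and
   |S| <= 4w as soon as n > 4w + 1.  Two vertices outside S with the same neighbours in S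
   have the same neighbourhood, so they are twins in G and in its complement: this gives at
   most |S| + 2^|S| classes.  For n <= 2^k + k the partition into singletons suffices. *)

Lemma path_exit (T : Type) (g : rel T) (D : pred T) (x : T) (p : seq T) :
  path g x p -> D x -> ~~ D (last x p) -> exists y z, [&& g y z, D y & ~~ D z].
Proof.
elim: p x => [|z p IHp] x /=; first by move=> _ ->.
case/andP=> gxz gp Dx Dlast; have [Dz|nDz] := boolP (D z); first exact: IHp Dlast.
by exists x, z; rewrite gxz Dx nDz.
Qed.

Definition connected_in (m : nat) (f : rel 'I_m) (P : pred 'I_m) : Prop :=
  forall a b, P a -> P b -> connect (fun a b => [&& f a b, P a & P b]) a b.

Section RootedTree.

Variables (m : nat) (f : rel 'I_m) (r : 'I_m).
Hypothesis ftree : is_tree f.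

Fixpoint ball k : {set 'I_m} :=
  if k is k'.+1 then ball k' :|: [set j | [exists i in ball k', f i j]]
  else [set r].

Lemma ball_step k a b : a \in ball k -> f a b -> b \in ball k.+1.
Proof.
by move=> ak fab; rewrite /= !inE; apply/orP; right; apply/existsP; exists a; rewrite ak.
Qed.

Lemma ball_cover i : exists k, i \in ball k.
Proof.
case: ftree => _ _ _ conn _; have /connectP [p fp ->] := conn r i.
exists (size p); elim/last_ind: p fp => [|p j IHp]; first by rewrite inE.
rewrite rcons_path last_rcons size_rcons => /andP [/IHp pk fj].
exact: ball_step pk fj.
Qed.

Definition depth i := ex_minn (ball_cover i).

Lemma mem_ball i k : (i \in ball k) = (depth i <= k).
Proof.
rewrite /depth; case: ex_minnP => n ni nmin; apply/idP/idP; first exact: nmin.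
move=> /subnK <-; elim: (k - n) => [|d IHd] //.
by rewrite addSn /= inE IHd.
Qed.

Lemma depth_eq0 i : (depth i == 0) = (i == r).
Proof. by rewrite -leqn0 -mem_ball inE. Qed.

Lemma depth_root : depth r = 0.
Proof. by apply/eqP; rewrite depth_eq0. Qed.

Lemma depth_edge a b : f a b -> depth b <= (depth a).+1.
Proof. by move=> fab; rewrite -mem_ball; apply: ball_step fab; rewrite mem_ball. Qed.

Lemma exists_parent i : i != r -> exists j, f i j && ((depth j).+1 == depth i).
Proof.
case: ftree => _ fsym _ _ _; rewrite -depth_eq0.
case di: (depth i) => [|k] // _.
have : i \in ball k.+1 by rewrite mem_ball di.
rewrite /= inE mem_ball di ltnn inE => /existsP [j /andP [jk fji]].
exists j; rewrite fsym fji eqSS eqn_leq -mem_ball jk /= -ltnS -di.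
exact: depth_edge.
Qed.

Definition par i :=
  if [pick j | f i j && ((depth j).+1 == depth i)] is Some j then j else r.

Lemma parP i : i != r -> f i (par i) /\ (depth (par i)).+1 = depth i.
Proof.
move=> ir; rewrite /par; case: pickP => [j /andP [? /eqP ?] //|none].
by have [j fj] := exists_parent ir; move: (none j); rewrite fj.
Qed.

Lemma par_root : par r = r.
Proof. by rewrite /par; case: pickP => [j /andP [_ /eqP]|//]; rewrite depth_root. Qed.

Lemma depth_par i : depth (par i) = (depth i).-1.
Proof.
have [->|ir] := eqVneq i r; first by rewrite par_root depth_root.
by have [_ <-] := parP ir.
Qed.

Lemma depth_iter_par n i : depth (iter n par i) = depth i - n.
Proof. by elim: n => [|n IHn]; rewrite ?subn0 // iterS depth_par IHn subnS. Qed.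

(* The m - 1 parent edges are distinct and already exhaust the m - 1 edges of the tree. *)
Lemma tree_edge_par a b : f a b -> (a != r /\ b = par a) \/ (b != r /\ a = par b).
Proof.
case: ftree => _ fsym _ _ card_edges fab.
pose up := [set (i, par i) | i in [set~ r]].
pose down := [set (par i, i) | i in [set~ r]].
have up_down0 : up :&: down = set0.
  apply/setP=> -[x y]; rewrite !inE; apply/andP=> -[/imsetP [i ir [-> ->]]].
  case/imsetP=> j jr [ij pj]; rewrite !inE in ir jr.
  by have [_] := parP ir; have [_] := parP jr; rewrite -ij -pj; lia.
have card_up : #|up| = m.-1 by rewrite card_imset ?cardsC1 ?card_ord // => ? ? [].
have card_down : #|down| = m.-1 by rewrite card_imset ?cardsC1 ?card_ord // => ? ? [].
have sub_edges : up :|: down \subset [set p | f p.1 p.2].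
  apply/subsetP=> p; rewrite !inE => /orP [] /imsetP [i]; rewrite !inE => ir -> /=;
    by have [fi _] := parP ir; rewrite // fsym.
have : (a, b) \in up :|: down.
  suff -> : up :|: down = [set p | f p.1 p.2] by rewrite inE.
  apply/eqP; rewrite eqEcard sub_edges cardsU up_down0 cards0 card_up card_down.
  by rewrite card_edges; lia.
by rewrite inE => /orP [] /imsetP [i]; rewrite !inE => ir [-> ->]; [left | right].
Qed.

Lemma depth_ancestor x y : fconnect par x y -> depth y <= depth x.
Proof. by move=> xy; rewrite -(iter_findex xy) depth_iter_par leq_subr. Qed.

Lemma ancestor_depth_eq x y : fconnect par x y -> depth y = depth x -> y = x.
Proof.
move=> xy; have <- := iter_findex xy; move: (findex _ _ _) => n.
rewrite depth_iter_par; case: n => [//|n] dx.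
have : depth x == 0 by lia.
by rewrite depth_eq0 => /eqP ->; rewrite iter_fix // par_root.
Qed.

Lemma ancestor_par x y : fconnect par x y -> x != y -> fconnect par (par x) y.
Proof.
move=> /connectP [[|z p] /= px ->]; first by rewrite eqxx.
by case/andP: px => /eqP <- pp _; apply/connectP; exists p.
Qed.

Section ConnectedSet.

Variable P : pred 'I_m.
Hypothesis Pconn : connected_in f P.

(* A path inside P from i to t must leave the descendants of i, which by [tree_edge_par]
   it can only do along the edge from i to its parent. *)
Lemma par_mem_of_not_ancestor i t :
  P i -> P t -> ~~ fconnect par t i -> i != r /\ P (par i).
Proof.
move=> Pi Pt not_it; have /connectP [p gp tp] := Pconn Pi Pt.
rewrite tp in not_it.
have [y [z /and3P [/and3P [fyz _ Pz] yi not_zi]]] :=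
  path_exit (D := fun x => fconnect par x i) gp (connect0 _ i) not_it.
case: (tree_edge_par fyz) => [[yr zy]|[_ yz]].
- have [yi_eq|ny] := eqVneq y i; first by rewrite -yi_eq -zy.
  by rewrite zy (ancestor_par yi ny) in not_zi.
- by rewrite (connect_trans (fconnect1 par z)) -?yz in not_zi.
Qed.

Lemma mem_iter_par t x n : P t -> P x -> n <= depth x - depth t -> P (iter n par x).
Proof.
move=> Pt Px; elim: n => [//|n IHn] lt_n; rewrite iterS.
have Pxn := IHn (ltnW lt_n).
have not_anc : ~~ fconnect par t (iter n par x).
  by apply/negP => /depth_ancestor; rewrite depth_iter_par; lia.
by have [] := par_mem_of_not_ancestor Pxn Pt not_anc.
Qed.

Lemma min_depth_unique a t :
  P a -> P t -> (forall j, P j -> depth t <= depth j) -> depth a <= depth t -> a = t.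
Proof.
move=> Pa Pt tmin at_; have [ta|not_ta] := boolP (fconnect par t a).
  by apply: ancestor_depth_eq ta _; have := tmin a Pa; lia.
have [ar Ppar] := par_mem_of_not_ancestor Pa Pt not_ta.
have [_] := parP ar; have := tmin _ Ppar; lia.
Qed.

End ConnectedSet.

Lemma min_depth_mem_meet (P Q : pred 'I_m) i t s :
  connected_in f P -> connected_in f Q -> P i -> Q i ->
  P t -> (forall j, P j -> depth t <= depth j) ->
  Q s -> depth s <= depth t -> Q t.
Proof.
move=> Pconn Qconn Pi Qi Pt tmin Qs st; have ti := tmin i Pi.
pose a := iter (depth i - depth t) par i.
have Pa : P a := mem_iter_par Pconn Pt Pi (leqnn _).
have <- : a = t.
  apply: (min_depth_unique Pconn Pa Pt tmin).
  by rewrite depth_iter_par; lia.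
by rewrite /a; apply: (mem_iter_par Qconn Qs Qi); lia.
Qed.

End RootedTree.

Lemma sum_deg_le_charge (T : finType) (e : rel T) (A : T -> {set T}) (w : nat) :
  (forall u v, e u v -> (v \in A u) || (u \in A v)) -> (forall u, #|A u| <= w) ->
  \sum_u deg e u <= 2 * (#|T| * w).
Proof.
move=> charged A_le.
have deg_le u : deg e u <= #|A u| + #|[set x | u \in A x]|.
  have sub : [set x | e u x] \subset A u :|: [set x | u \in A x].
    by apply/subsetP=> x; rewrite !inE => /charged.
  by rewrite /deg; apply: leq_trans (subset_leq_card sub) _; rewrite cardsU leq_subr.
have double_count : \sum_u #|[set x | u \in A x]| = \sum_x #|A x|.
  under eq_bigr => u _ do rewrite -sum1dep_card.
  by rewrite (exchange_big_dep predT) //=; apply: eq_bigr => x _; rewrite sum1_card.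
apply: (@leq_trans (\sum_u (#|A u| + #|[set x | u \in A x]|))).
  by apply: leq_sum => u _.
rewrite big_split /= double_count addnn -mul2n leq_mul2l -sum_nat_const /=.
by apply: leq_sum => u _.
Qed.

Section TreeDecomposition.

Variables (T : finType) (e : rel T) (m : nat) (f : rel 'I_m) (B : 'I_m -> {set T}).
Hypothesis td : tree_decomposition e f B.

Lemma td_tree : is_tree f. Proof. by case: td. Qed.

Lemma td_cover v : exists i, v \in B i. Proof. by case: td. Qed.

Lemma td_connected v : connected_in f (fun i => v \in B i).
Proof. by case: td => _ _ _ conn a b; apply: conn. Qed.

Lemma td_nonempty : 0 < m. Proof. by case: td_tree. Qed.

Let r : 'I_m := Ordinal td_nonempty.
Local Notation depth := (depth r td_tree).

Definition top_bag v :=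
  [arg min_(i < xchoose (td_cover v) | v \in B i) depth i].

Lemma top_bagP v : v \in B (top_bag v) /\ forall i, v \in B i -> depth (top_bag v) <= depth i.
Proof. by rewrite /top_bag; case: arg_minnP; [exact: (xchooseP (td_cover v)) | split]. Qed.

Lemma edge_mem_top_bag u v : e u v -> (v \in B (top_bag u)) || (u \in B (top_bag v)).
Proof.
case: td => _ _ td_edge _ euv; have [i /andP [ui vi]] := td_edge u v euv.
have [tu tu_min] := top_bagP u; have [tv tv_min] := top_bagP v.
have [le|lt] := leqP (depth (top_bag v)) (depth (top_bag u)).
- by rewrite (min_depth_mem_meet (@td_connected u) (@td_connected v) ui vi tu tu_min tv le).
- have lt' := ltnW lt.
  by rewrite (min_depth_mem_meet (@td_connected v) (@td_connected u) vi ui tv tv_min tu lt') orbT.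
Qed.

Lemma sum_deg_le_width : irreflexive e -> \sum_u deg e u <= 2 * (#|T| * td_width B).
Proof.
move=> eirr; apply: (sum_deg_le_charge (A := fun u => B (top_bag u) :\ u)) => [u v euv|u].
  have uv : u != v by apply: contraTneq euv => ->; rewrite eirr.
  by rewrite !inE [v == u]eq_sym uv; apply: edge_mem_top_bag.
have [uB _] := top_bagP u; have := leq_bigmax (F := fun i => #|B i|) (top_bag u).
by rewrite /td_width (cardsD1 u) uB /=; lia.
Qed.

End TreeDecomposition.

Section ComplementDegrees.

Variables (T : finType) (e : rel T).
Hypothesis eirr : irreflexive e.

Lemma deg_compl_graph u : (deg (compl_graph e) u + deg e u).+1 = #|T|.
Proof.
rewrite /deg.
have -> : [set x | compl_graph e u x] = ~: (u |: [set x | e u x]).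
  by apply/setP=> x; rewrite !inE /compl_graph negb_or eq_sym.
by rewrite -(cardsC (u |: [set x | e u x])) cardsU1 inE eirr addnC.
Qed.

Lemma compl_closed_deg_sum :
  (forall u v, u != v -> ~~ compl_graph e u v ->
     deg (compl_graph e) u + deg (compl_graph e) v < #|T|) ->
  forall u v, e u v -> #|T|.-1 <= deg e u + deg e v.
Proof.
move=> closed u v euv; have uv : u != v by apply: contraTneq euv => ->; rewrite eirr.
have nc : ~~ compl_graph e u v by rewrite /compl_graph euv andbF.
by have := closed u v uv nc; have := deg_compl_graph u; have := deg_compl_graph v; lia.
Qed.

End ComplementDegrees.

Definition heavy (T : finType) (e : rel T) : {set T} := [set u | #|T|.-1 <= 2 * deg e u].

Lemma heavy_vertex_cover (T : finType) (e : rel T) :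
  (forall u v, e u v -> #|T|.-1 <= deg e u + deg e v) ->
  forall u v, e u v -> (u \in heavy e) || (v \in heavy e).
Proof. by move=> deg_sum u v /deg_sum; rewrite !inE; lia. Qed.

Lemma card_heavy (T : finType) (e : rel T) : #|heavy e| * #|T|.-1 <= 2 * \sum_u deg e u.
Proof.
rewrite -sum_nat_const big_distrr /= big_mkcond /=.
by apply: leq_sum => u _; case: ifPn => //; rewrite inE.
Qed.

Section NeighborhoodDiversity.

Variables (T : finType) (e : rel T).

Lemma nd_partition_enum_rank : nd_partition e (@enum_rank T).
Proof. by move=> v v' /enum_rank_inj ->. Qed.

Lemma nd_partition_compl k (c : T -> 'I_k) : nd_partition e c -> nd_partition (compl_graph e) c.
Proof.
move=> twins v v' /twins /setP same; apply/setP=> x; have := same x.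
rewrite !inE /compl_graph [v' == x]eq_sym [v == x]eq_sym.
by case: (x == v); case: (x == v'); case: (e v x); case: (e v' x).
Qed.

Variable S : {set T}.

Definition cover_class u : {x | x \in S} + {ffun {x | x \in S} -> bool} :=
  if insub u is Some s then inl s else inr [ffun s => e u (val s)].

Lemma card_cover_class_type :
  #|{: {x | x \in S} + {ffun {x | x \in S} -> bool}}| = #|S| + 2 ^ #|S|.
Proof. by rewrite card_sum card_ffun card_bool card_sig. Qed.

Lemma nd_partition_cover_class :
  irreflexive e -> (forall u v, e u v -> (u \in S) || (v \in S)) ->
  nd_partition e (fun u => enum_rank (cover_class u)).
Proof.
move=> eirr cover u v /enum_rank_inj; rewrite /cover_class.
case: insubP => [su _ <-|uS]; case: insubP => [sv _ <-|vS] //; first by case=> ->.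
case=> /ffunP same.
have eN z : e u z = e v z.
  have [zS|zS] := boolP (z \in S).
    by have := same (Sub z zS); rewrite !ffunE SubK.
  by apply/idP/idP => /cover; rewrite (negbTE zS) ?(negbTE uS) ?(negbTE vS).
apply/setP=> z; rewrite !inE eN.
have [->|zv] := eqVneq z v; first by rewrite eirr !andbF.
by have [->|//] := eqVneq z u; rewrite -eN eirr !andbF.
Qed.

End NeighborhoodDiversity.

Theorem theorem2 (T : finType) (e : rel T) (w : nat) :
  simple_graph e ->
  treewidth_eq e w ->
  (forall u v, u != v -> ~~ compl_graph e u v ->
     deg (compl_graph e) u + deg (compl_graph e) v < #|T|) ->
  forall d, nd_eq (compl_graph e) d ->
  d <= 2 ^ (2 * (w ^ 2 + w)) + 2 * (w ^ 2 + w).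
Proof.
move=> [_ eirr] [[m [f [B [td width_w]]]] _] closed d [_ d_min].
set k := 2 * (w ^ 2 + w).
have [small|big] := leqP #|T| (2 ^ k + k).
  exact: leq_trans (d_min _ _ (nd_partition_enum_rank _)) small.
have cover := heavy_vertex_cover (compl_closed_deg_sum eirr closed).
have sum_deg := sum_deg_le_width td eirr; rewrite width_w in sum_deg.
have card_S := card_heavy e.
have k_ge : 4 * w <= k by rewrite /k; nia.
have S_le : #|heavy e| <= k.
  suff : #|heavy e| <= 4 * w by lia.
  have : 4 * w + 1 < #|T| by have := ltn_expl k (ltnSn 1); lia.
  nia.
apply: leq_trans (d_min _ _ (nd_partition_compl (nd_partition_cover_class eirr cover))) _.
by rewrite card_cover_class_type addnC leq_add // leq_pexp2l.
Qed.
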